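(* Let $M$ be a smooth manifold, $g$ a pseudo-Riemannian metric on $M$ with Levi-Civita connection $\nabla$, and $J$ a $(1,1)$-tensor field on $M$ with $J^2=pJ+qI$ for real numbers $p,q$ satisfying $p^2+4q>0$, such that $J$ is $g$-symmetric. Then the following assertions are equivalent: (i) the distributions $\mathcal{D}$ and $\mathcal{D}'$ are both integrable; (ii) $N_J=0$; (iii) $L=0$ and $L'=0$; (iv) the Vidal connection $\tilde{\tilde{\nabla}}$ is torsion-free.
   Context: Put $\sigma_{\pm}:=\frac{p\pm\sqrt{p^2+4q}}{2}$ and define the projections $\mathcal{P}:=\frac{1}{\sqrt{p^2+4q}}(-J+\sigma_{+}I)$, $\mathcal{P}':=\frac{1}{\sqrt{p^2+4q}}(J-\sigma_{-}I)$. The metallic distributions are $\mathcal{D}:=\ker\mathcal{P}'=\{X: JX=\sigma_{-}X\}$ and $\mathcal{D}':=\ker\mathcal{P}=\{X: JX=\sigma_{+}X\}$. A distribution is integrable if it is involutive (closed under the Lie bracket). The Nijenhuis tensor is $N_J(X,Y):=J([JX,Y]+[X,JY]-J[X,Y])-[JX,JY]$. Define $H(X,Y):=\mathcal{P}'(\nabla_{\mathcal{P}X}\mathcal{P}Y)$, $H'(X,Y):=\mathcal{P}(\nabla_{\mathcal{P}'X}\mathcal{P}'Y)$, and the twisting tensors $L(X,Y):=\frac12[H(X,Y)-H(Y,X)]$, $L'(X,Y):=\frac12[H'(X,Y)-H'(Y,X)]$. The Vidal connection is $\tilde{\tilde{\nabla}}_XY:=\nabla_XY+\frac{1}{p^2+4q}[2J((\nabla_XJ)Y)-p(\nabla_XJ)Y+J((\nabla_YJ)X)+(\nabla_{JY}J)X-p(\nabla_YJ)X]$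 for vector fields $X,Y$. *)

(* Abstract (algebraic) model of the differential-geometric
   setting: A plays the role of C^oo(M) (a commutative R-algebra), V the role
   of the C^oo(M)-module of vector fields X(M), with its Lie bracket and its
   action by derivations on functions (a Lie–Rinehart algebra).  Tensor fields
   of type (1,1) are A-linear endomorphisms of V, a pseudo-Riemannian metric
   is a symmetric nondegenerate A-bilinear form V x V -> A, and the
   Levi-Civita connection is the affine connection which is torsion-free and
   metric. *)
From HB Require Import structures.
From mathcomp Require Import all_boot all_order all_algebra.
From mathcomp Require Import reals.
Set Implicit Arguments. Unset Strict Implicit. Unset Printing Implicit Defensive.
Import Order.TTheory GRing.Theory Num.Theory.
Local Open Scope ring_scope.

Section Geometry.
Variables (R : realType) (A : comAlgType R) (V : lmodType A).

Definition rsc (r : R) (X : V) : V := (r%:A : A) *: X.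

Record LieRinehart := {
  lbr : V -> V -> V;
  der : V -> A -> A;
  lbr_addl : forall X Y Z, lbr (X + Y) Z = lbr X Z + lbr Y Z;
  lbr_rscl : forall (r : R) X Y, lbr (rsc r X) Y = rsc r (lbr X Y);
  lbr_anti : forall X Y, lbr X Y = - lbr Y X;
  lbr_jacobi : forall X Y Z,
    lbr X (lbr Y Z) + lbr Y (lbr Z X) + lbr Z (lbr X Y) = 0;
  lbr_leibniz : forall X Y (f : A), lbr X (f *: Y) = f *: lbr X Y + der X f *: Y;
  der_addv : forall X Y f, der (X + Y) f = der X f + der Y f;
  der_scalev : forall (h : A) X f, der (h *: X) f = h * der X f;
  der_add : forall X f h, der X (f + h) = der X f + der X h;
  der_rscale : forall X (r : R) f, der X (r *: f) = r *: der X f;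
  der_mul : forall X f h, der X (f * h) = der X f * h + f * der X h;
  der_lbr : forall X Y f, der (lbr X Y) f = der X (der Y f) - der Y (der X f)
}.

Variable L : LieRinehart.

Definition pseudo_riemannian (g : V -> V -> A) : Prop :=
  [/\ forall X Y, g X Y = g Y X,
      forall X X' Y, g (X + X') Y = g X Y + g X' Y,
      forall (f : A) X Y, g (f *: X) Y = f * g X Y
    & forall X, (forall Y, g X Y = 0) -> X = 0].

Definition connection (nabla : V -> V -> V) : Prop :=
  [/\ forall X X' Y, nabla (X + X') Y = nabla X Y + nabla X' Y,
      forall (f : A) X Y, nabla (f *: X) Y = f *: nabla X Y,
      forall X Y Y', nabla X (Y + Y') = nabla X Y + nabla X Y'
    & forall X (f : A) Y, nabla X (f *: Y) = der L X f *: Y + f *: nabla X Y].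

Definition torsion_free (nabla : V -> V -> V) : Prop :=
  forall X Y, nabla X Y - nabla Y X - lbr L X Y = 0.

Definition levi_civita (g : V -> V -> A) (nabla : V -> V -> V) : Prop :=
  [/\ connection nabla, torsion_free nabla
    & forall X Y Z, der L X (g Y Z) = g (nabla X Y) Z + g Y (nabla X Z)].

Variables (J : V -> V) (p q : R).

Definition sqrtD : R := Num.sqrt (p ^+ 2 + 4%:R * q).
Definition sigma_plus : R := (p + sqrtD) / 2%:R.
Definition sigma_minus : R := (p - sqrtD) / 2%:R.

Definition projP (X : V) : V := rsc (sqrtD^-1) (- J X + rsc sigma_plus X).
Definition projP' (X : V) : V := rsc (sqrtD^-1) (J X - rsc sigma_minus X).

Definition distD (X : V) : Prop := projP' X = 0.
Definition distD' (X : V) : Prop := projP X = 0.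

(* integrable = involutive *)
Definition integrable (D : V -> Prop) : Prop :=
  forall X Y, D X -> D Y -> D (lbr L X Y).

Definition nijenhuis (X Y : V) : V :=
  J (lbr L (J X) Y + lbr L X (J Y) - J (lbr L X Y)) - lbr L (J X) (J Y).

Variable nabla : V -> V -> V.

Definition covJ (X Y : V) : V := nabla X (J Y) - J (nabla X Y).

Definition H (X Y : V) : V := projP' (nabla (projP X) (projP Y)).
Definition H' (X Y : V) : V := projP (nabla (projP' X) (projP' Y)).
Definition twistL (X Y : V) : V := rsc (2%:R^-1) (H X Y - H Y X).
Definition twistL' (X Y : V) : V := rsc (2%:R^-1) (H' X Y - H' Y X).

Definition vidal (X Y : V) : V :=
  nabla X Y + rsc ((p ^+ 2 + 4%:R * q)^-1)
    (rsc 2%:R (J (covJ X Y)) - rsc p (covJ X Y) + J (covJ Y X)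
     + covJ (J Y) X - rsc p (covJ Y X)).

End Geometry.

From HB Require Import structures.
From mathcomp Require Import all_boot all_order all_algebra.
From mathcomp Require Import reals ring.
Set Implicit Arguments. Unset Strict Implicit. Unset Printing Implicit Defensive.
Import Order.TTheory GRing.Theory Num.Theory.
Local Open Scope ring_scope.

(* D and D' are the eigendistributions of J for the eigenvalues sigma_- and
   sigma_+, and P, P' are the complementary projectors onto them.  For
   eigenvector fields X, Y with eigenvalues a, b one has
   N_J(X,Y) = (a + b - p) J[X,Y] - (a b + q)[X,Y]; this vanishes when
   {a, b} = {sigma_+, sigma_-}, and equals -(p^2 + 4q) times the D'- resp.
   D-component of [X,Y] when a = b = sigma_- resp. sigma_+.  Hence
   N_J(X,Y) = -(p^2 + 4q)(P'[PX,PY] + P[P'X,P'Y]), so N_J = 0 exactly when both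
   distributions are involutive.  For a torsion-free connection
   L = P'[PX,PY]/2 and L' = P[P'X,P'Y]/2, and the torsion of the Vidal
   connection is N_J/(p^2 + 4q). *)

Inductive zterm : Type :=
  | ZVar of nat | ZZero | ZAdd of zterm & zterm | ZOpp of zterm.

Fixpoint coefs_add (s t : seq int) : seq int :=
  match s, t with
  | [::], _ => t
  | _, [::] => s
  | a :: s', b :: t' => (a + b) :: coefs_add s' t'
  end.

Fixpoint zterm_coefs (t : zterm) : seq int :=
  match t with
  | ZVar n => rcons (nseq n 0) 1
  | ZZero => [::]
  | ZAdd t1 t2 => coefs_add (zterm_coefs t1) (zterm_coefs t2)
  | ZOpp t1 => map -%R (zterm_coefs t1)
  end.

Section ZmodNormalForm.
Variable V : zmodType.

Fixpoint zeval (env : seq V) (t : zterm) : V :=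
  match t with
  | ZVar n => env`_n
  | ZZero => 0
  | ZAdd t1 t2 => zeval env t1 + zeval env t2
  | ZOpp t1 => - zeval env t1
  end.

Fixpoint zcomb (env : seq V) (cs : seq int) : V :=
  if cs is c :: cs' then env`_0 *~ c + zcomb (behead env) cs' else 0.

Lemma zcomb_add s t env : zcomb env (coefs_add s t) = zcomb env s + zcomb env t.
Proof.
elim: s t env => [|a s IH] [|b t] env /=; rewrite ?add0r ?addr0 //.
by rewrite IH mulrzDr addrACA.
Qed.

Lemma zcomb_opp s env : zcomb env (map -%R s) = - zcomb env s.
Proof. by elim: s env => [|a s IH] env /=; rewrite ?oppr0 // IH mulrNz opprD. Qed.

Lemma zcomb_var n env : zcomb env (rcons (nseq n 0) 1) = env`_n.
Proof.
elim: n env => [|n IH] [|x env] /=; rewrite ?mulr0z ?add0r ?addr0 //.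
by rewrite IH nth_nil.
Qed.

Lemma zeval_coefs env t : zeval env t = zcomb env (zterm_coefs t).
Proof.
elim: t => [n||t1 IH1 t2 IH2|t1 IH1] /=.
- by rewrite zcomb_var.
- by [].
- by rewrite zcomb_add IH1 IH2.
- by rewrite zcomb_opp IH1.
Qed.

Lemma zeval_eq env t1 t2 :
  all (eq_op^~ 0) (zterm_coefs (ZAdd t1 (ZOpp t2))) -> zeval env t1 = zeval env t2.
Proof.
move=> coefs0; apply/eqP; rewrite -subr_eq0; apply/eqP.
have -> : zeval env t1 - zeval env t2 = zeval env (ZAdd t1 (ZOpp t2)) by [].
rewrite zeval_coefs; elim: (zterm_coefs _) env coefs0 => [|c cs IH] env //=.
by case/andP=> /eqP-> /IH->; rewrite mulr0z addr0.
Qed.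

End ZmodNormalForm.

(* [abel] proves identities in a zmodType: both sides are reified over a common
   list of atoms (identified up to unification) and their integer coefficient
   vectors are compared by computation. *)
Ltac zterm_index x l :=
  lazymatch l with
  | ?y :: ?l' =>
      match constr:(tt) with
      | _ => let _ := match constr:(tt) with _ => unify x y end in constr:(0%N)
      | _ => let n := zterm_index x l' in constr:(n.+1)
      end
  end.

Ltac zterm_atoms e l :=
  lazymatch e with
  | @GRing.add _ ?a ?b => let l' := zterm_atoms a l in zterm_atoms b l'
  | @GRing.opp _ ?a => zterm_atoms a l
  | @GRing.zero _ => l
  | _ => match constr:(tt) with
         | _ => let _ := zterm_index e l in l
         | _ => constr:(e :: l)
         end
  end.

Ltac zterm_reify e l :=
  lazymatch e with
  | @GRing.add _ ?a ?b =>
      let ta := zterm_reify a l in let tb := zterm_reify b l in constr:(ZAdd ta tb)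
  | @GRing.opp _ ?a => let ta := zterm_reify a l in constr:(ZOpp ta)
  | @GRing.zero _ => constr:(ZZero)
  | _ => let n := zterm_index e l in constr:(ZVar n)
  end.

Ltac abel :=
  lazymatch goal with |- @eq ?T ?a ?b =>
    let l := zterm_atoms a (@nil T) in
    let l := zterm_atoms b l in
    let ta := zterm_reify a l in
    let tb := zterm_reify b l in
    change (zeval l ta = zeval l tb); apply: zeval_eq; vm_compute; reflexivity
  end.

Section RealScaling.
Variables (R : realType) (A : comAlgType R) (V : lmodType A).
Implicit Types (r s : R) (v w : V).

Lemma rscA r s v : rsc r (rsc s v) = rsc (r * s) v.
Proof. by rewrite /rsc scalerA mulr_algl scalerA. Qed.

Lemma rscDl r s v : rsc (r + s) v = rsc r v + rsc s v.
Proof. by rewrite /rsc scalerDl scalerDl. Qed.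

Lemma rscDr r v w : rsc r (v + w) = rsc r v + rsc r w.
Proof. exact: scalerDr. Qed.

Lemma rscN r v : rsc r (- v) = - rsc r v.
Proof. exact: scalerN. Qed.

Lemma rscNl r v : rsc (- r) v = - rsc r v.
Proof. by rewrite /rsc !scaleNr. Qed.

Lemma rsc0 v : rsc 0 v = 0.
Proof. by rewrite /rsc !scale0r. Qed.

Lemma rscr0 r : rsc r (0 : V) = 0.
Proof. exact: scaler0. Qed.

Lemma rsc1 v : rsc 1 v = v.
Proof. by rewrite /rsc !scale1r. Qed.

Lemma rsc_nat n v : rsc n%:R v = v *+ n.
Proof. by rewrite /rsc !scaler_nat. Qed.

Lemma linear_rsc (f : {linear V -> V}) r v : f (rsc r v) = rsc r (f v).
Proof. exact: linearZ. Qed.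

Lemma rsc_eq0 r v : r != 0 -> (rsc r v == 0) = (v == 0).
Proof.
move=> r_neq0; apply/eqP/eqP=> [rv0|->]; last exact: rscr0.
by rewrite -[v]rsc1 -(mulVf r_neq0) -rscA rv0 rscr0.
Qed.

Lemma scaled_eq0P (I1 I2 : Type) r (u v : I1 -> I2 -> V) : r != 0 ->
  (forall i j, u i j = rsc r (v i j)) ->
  (forall i j, u i j = 0) <-> (forall i j, v i j = 0).
Proof.
move=> r_neq0 uE; split=> eq0 i j; apply/eqP.
- by rewrite -(rsc_eq0 _ r_neq0) -uE eq0.
- by rewrite uE (rsc_eq0 _ r_neq0) eq0.
Qed.

End RealScaling.

Section Bracket.
Variables (R : realType) (A : comAlgType R) (V : lmodType A) (L : LieRinehart V).

Lemma lbr_addr X Y Y' : lbr L X (Y + Y') = lbr L X Y + lbr L X Y'.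
Proof. by rewrite lbr_anti lbr_addl opprD -!(lbr_anti L). Qed.

Lemma lbr_rscr (r : R) X Y : lbr L X (rsc r Y) = rsc r (lbr L X Y).
Proof. by rewrite lbr_anti lbr_rscl -rscN -lbr_anti. Qed.

End Bracket.

Section JCombination.
Variables (R : realType) (A : comAlgType R) (V : lmodType A).
Variables (J : {linear V -> V}) (p q : R).
Hypothesis J2 : forall X, J (J X) = rsc p (J X) + rsc q X.

Definition jcomb (Z : V) (a b : R) : V := rsc a (J Z) + rsc b Z.

Lemma jcomb_id Z : Z = jcomb Z 0 1.
Proof. by rewrite /jcomb rsc0 rsc1 add0r. Qed.

Lemma jcomb_J Z : J Z = jcomb Z 1 0.
Proof. by rewrite /jcomb rsc0 rsc1 addr0. Qed.

Lemma jcomb0 Z : 0 = jcomb Z 0 0.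
Proof. by rewrite /jcomb !rsc0 addr0. Qed.

Lemma jcombD Z v w a b c d : v = jcomb Z a b -> w = jcomb Z c d ->
  v + w = jcomb Z (a + c) (b + d).
Proof. by move=> -> ->; rewrite /jcomb !rscDl addrACA. Qed.

Lemma jcombN Z v a b : v = jcomb Z a b -> - v = jcomb Z (- a) (- b).
Proof. by move=> ->; rewrite /jcomb !rscNl opprD. Qed.

Lemma jcomb_rsc Z v r a b : v = jcomb Z a b -> rsc r v = jcomb Z (r * a) (r * b).
Proof. by move=> ->; rewrite /jcomb rscDr !rscA. Qed.

Lemma jcombJ Z v a b : v = jcomb Z a b -> J v = jcomb Z (a * p + b) (a * q).
Proof.
move=> ->; rewrite /jcomb linearD /= !linear_rsc J2 rscDr !rscA rscDl.
by rewrite addrAC.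
Qed.

Lemma jcomb_eq Z v w a b c d : v = jcomb Z a b -> w = jcomb Z c d ->
  a = c -> b = d -> v = w.
Proof. by move=> -> -> -> ->. Qed.

End JCombination.

(* Using J^2 = pJ + q, every expression built from Z by J, +, - and rsc reduces
   to some [jcomb J Z a b]; [jcomb_coefs Z] reduces an identity between two such
   expressions to the identities between their coefficients. *)
Ltac jcomb_reify :=
  first [ exact: jcomb0 | exact: jcomb_id | exact: jcomb_J
        | apply: jcombD; [jcomb_reify | jcomb_reify]
        | apply: jcombN; jcomb_reify
        | apply: jcomb_rsc; jcomb_reify
        | apply: jcombJ; [eassumption | jcomb_reify] ].

Ltac jcomb_coefs Z := apply: (@jcomb_eq _ _ _ _ Z); [jcomb_reify | jcomb_reify | |].

Section Discriminant.
Variables (R : realType) (p q : R).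
Hypothesis disc_gt0 : 0 < p ^+ 2 + 4%:R * q.

Local Notation s := (sqrtD p q).

Lemma sqrtD_gt0 : 0 < s.
Proof. by rewrite sqrtr_gt0. Qed.

Lemma sqrtD_neq0 : s != 0.
Proof. by rewrite gt_eqF // sqrtD_gt0. Qed.

Lemma sqr_sqrtD : s ^+ 2 = p ^+ 2 + 4%:R * q.
Proof. by rewrite sqr_sqrtr // ltW. Qed.

Lemma q_sqrtD : q = (s ^+ 2 - p ^+ 2) / 4%:R.
Proof. by rewrite sqr_sqrtD; field. Qed.

End Discriminant.

(* Eliminating q = (s^2 - p^2)/4 turns the scalar identities below into
   rational identities in the independent variables p and s. *)
Ltac metallic_field disc_gt0 :=
  rewrite /sigma_plus /sigma_minus;
  move: (sqrtD_neq0 disc_gt0) (q_sqrtD disc_gt0);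
  let s := fresh "s" in set s := sqrtD _ _; clearbody s;
  let q_eq := fresh in move=> ? q_eq; rewrite ?q_eq; field; done.

Section MetallicProjectors.
Variables (R : realType) (A : comAlgType R) (V : lmodType A).
Variables (J : {linear V -> V}) (p q : R).
Hypothesis J2 : forall X, J (J X) = rsc p (J X) + rsc q X.
Hypothesis disc_gt0 : 0 < p ^+ 2 + 4%:R * q.

Local Notation P := (projP J p q).
Local Notation P' := (projP' J p q).

Lemma sigma_add : sigma_plus p q + sigma_minus p q = p.
Proof. by rewrite /sigma_plus /sigma_minus; field. Qed.

Lemma sigma_mul : sigma_plus p q * sigma_minus p q = - q.
Proof. metallic_field disc_gt0. Qed.

Lemma projP_eigen X : J (P X) = rsc (sigma_minus p q) (P X).
Proof. rewrite /projP; jcomb_coefs X; metallic_field disc_gt0. Qed.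

Lemma projP'_eigen X : J (P' X) = rsc (sigma_plus p q) (P' X).
Proof. rewrite /projP'; jcomb_coefs X; metallic_field disc_gt0. Qed.

Lemma projP_add_projP' X : P X + P' X = X.
Proof. rewrite /projP /projP'; jcomb_coefs X; metallic_field disc_gt0. Qed.

Lemma projP'_projP X : P' (P X) = 0.
Proof. rewrite /projP /projP'; jcomb_coefs X; metallic_field disc_gt0. Qed.

Lemma projP_projP' X : P (P' X) = 0.
Proof. rewrite /projP /projP'; jcomb_coefs X; metallic_field disc_gt0. Qed.

Lemma projPB X Y : P (X - Y) = P X - P Y.
Proof. by rewrite /projP /rsc (raddfB J) !(scalerDr, scalerN, opprD); abel. Qed.

Lemma projP'B X Y : P' (X - Y) = P' X - P' Y.
Proof. by rewrite /projP' /rsc (raddfB J) !(scalerDr, scalerN, opprD); abel. Qed.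

End MetallicProjectors.

Section NijenhuisTensor.
Variables (R : realType) (A : comAlgType R) (V : lmodType A) (L : LieRinehart V).
Variables (J : {linear V -> V}) (p q : R).
Hypothesis J2 : forall X, J (J X) = rsc p (J X) + rsc q X.
Hypothesis disc_gt0 : 0 < p ^+ 2 + 4%:R * q.

Local Notation s := (sqrtD p q).
Local Notation P := (projP J p q).
Local Notation P' := (projP' J p q).
Local Notation N := (nijenhuis L J).

Lemma nijenhuis_addl X X' Y : N (X + X') Y = N X Y + N X' Y.
Proof. by rewrite /nijenhuis !(linearD, linearB, lbr_addl) /=; abel. Qed.

Lemma nijenhuis_addr X Y Y' : N X (Y + Y') = N X Y + N X Y'.
Proof. by rewrite /nijenhuis !(linearD, linearB, lbr_addr) /=; abel. Qed.

Lemma nijenhuis_eigen a b X Y : J X = rsc a X -> J Y = rsc b Y ->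
  N X Y = jcomb J (lbr L X Y) (a + b - p) (- (a * b) - q).
Proof.
move=> JX JY; rewrite /nijenhuis JX JY lbr_rscl lbr_rscr lbr_rscl lbr_rscr.
by jcomb_coefs (lbr L X Y); ring.
Qed.

Lemma nijenhuis_eigen_compl a b X Y : a + b = p -> a * b = - q ->
  J X = rsc a X -> J Y = rsc b Y -> N X Y = 0.
Proof.
move=> ab_sum ab_prod JX JY; rewrite (nijenhuis_eigen JX JY) ab_sum ab_prod.
by rewrite subrr opprK subrr /jcomb !rsc0 addr0.
Qed.

Lemma nijenhuis_eigen_minus X Y :
  J X = rsc (sigma_minus p q) X -> J Y = rsc (sigma_minus p q) Y ->
  N X Y = rsc (- s ^+ 2) (P' (lbr L X Y)).
Proof.
move=> JX JY; rewrite (nijenhuis_eigen JX JY) /projP'.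
jcomb_coefs (lbr L X Y); metallic_field disc_gt0.
Qed.

Lemma nijenhuis_eigen_plus X Y :
  J X = rsc (sigma_plus p q) X -> J Y = rsc (sigma_plus p q) Y ->
  N X Y = rsc (- s ^+ 2) (P (lbr L X Y)).
Proof.
move=> JX JY; rewrite (nijenhuis_eigen JX JY) /projP.
jcomb_coefs (lbr L X Y); metallic_field disc_gt0.
Qed.

Lemma nijenhuis_decomp X Y :
  N X Y = rsc (- s ^+ 2) (P' (lbr L (P X) (P Y)) + P (lbr L (P' X) (P' Y))).
Proof.
have JP := projP_eigen J2 disc_gt0; have JP' := projP'_eigen J2 disc_gt0.
have [sum_pm prod_pm] := (sigma_add p q, sigma_mul disc_gt0).
have sum_mp : sigma_minus p q + sigma_plus p q = p by rewrite addrC.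
have prod_mp : sigma_minus p q * sigma_plus p q = - q by rewrite mulrC.
rewrite -{1}(projP_add_projP' J disc_gt0 X) -{1}(projP_add_projP' J disc_gt0 Y).
rewrite !(nijenhuis_addl, nijenhuis_addr).
rewrite (nijenhuis_eigen_minus (JP X) (JP Y)) (nijenhuis_eigen_plus (JP' X) (JP' Y)).
rewrite (nijenhuis_eigen_compl sum_mp prod_mp (JP X) (JP' Y)).
rewrite (nijenhuis_eigen_compl sum_pm prod_pm (JP' X) (JP Y)).
by rewrite addr0 add0r rscDr.
Qed.

Lemma integrable_distDP :
  integrable L (distD J p q) <-> forall X Y, P' (lbr L (P X) (P Y)) = 0.
Proof.
split=> [intD X Y | brD0 X Y P'X0 P'Y0].
  by apply: intD; apply: projP'_projP.
have PX : P X = X by rewrite -[RHS](projP_add_projP' J disc_gt0) P'X0 addr0.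
have PY : P Y = Y by rewrite -[RHS](projP_add_projP' J disc_gt0) P'Y0 addr0.
by rewrite /distD -PX -PY brD0.
Qed.

Lemma integrable_distD'P :
  integrable L (distD' J p q) <-> forall X Y, P (lbr L (P' X) (P' Y)) = 0.
Proof.
split=> [intD' X Y | brD'0 X Y PX0 PY0].
  by apply: intD'; apply: projP_projP'.
have P'X : P' X = X by rewrite -[RHS](projP_add_projP' J disc_gt0) PX0 add0r.
have P'Y : P' Y = Y by rewrite -[RHS](projP_add_projP' J disc_gt0) PY0 add0r.
by rewrite /distD' -P'X -P'Y brD'0.
Qed.

Lemma nijenhuis_eq0P : (forall X Y, N X Y = 0) <->
  (forall X Y, P' (lbr L (P X) (P Y)) = 0) /\ (forall X Y, P (lbr L (P' X) (P' Y)) = 0).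
Proof.
have s2_neq0 : - s ^+ 2 != 0 by rewrite oppr_eq0 expf_neq0 // sqrtD_neq0.
split=> [N0 | [brD0 brD'0] X Y]; last by rewrite nijenhuis_decomp brD0 brD'0 addr0 rscr0.
split=> X Y; apply/eqP; rewrite -(rsc_eq0 _ s2_neq0); apply/eqP.
- by rewrite -nijenhuis_eigen_minus ?projP_eigen.
- by rewrite -nijenhuis_eigen_plus ?projP'_eigen.
Qed.

End NijenhuisTensor.

Section TorsionFreeConnection.
Variables (R : realType) (A : comAlgType R) (V : lmodType A) (L : LieRinehart V).
Variables (J : {linear V -> V}) (p q : R) (nabla : V -> V -> V).
Hypothesis nabla_tf : torsion_free L nabla.

Local Notation P := (projP J p q).
Local Notation P' := (projP' J p q).
Local Notation N := (nijenhuis L J).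

Lemma lbr_torsion_free X Y : lbr L X Y = nabla X Y - nabla Y X.
Proof. by apply/esym/eqP; rewrite -subr_eq0; apply/eqP/nabla_tf. Qed.

Lemma twistLE X Y : twistL J p q nabla X Y = rsc 2^-1 (P' (lbr L (P X) (P Y))).
Proof. by rewrite /twistL /H -projP'B -lbr_torsion_free. Qed.

Lemma twistL'E X Y : twistL' J p q nabla X Y = rsc 2^-1 (P (lbr L (P' X) (P' Y))).
Proof. by rewrite /twistL' /H' -projPB -lbr_torsion_free. Qed.

Lemma twistL_eq0P :
  (forall X Y, twistL J p q nabla X Y = 0) <-> forall X Y, P' (lbr L (P X) (P Y)) = 0.
Proof. by apply: scaled_eq0P twistLE; rewrite invr_eq0 pnatr_eq0. Qed.

Lemma twistL'_eq0P :
  (forall X Y, twistL' J p q nabla X Y = 0) <-> forall X Y, P (lbr L (P' X) (P' Y)) = 0.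
Proof. by apply: scaled_eq0P twistL'E; rewrite invr_eq0 pnatr_eq0. Qed.

Lemma vidal_torsion X Y : vidal J p q nabla X Y - vidal J p q nabla Y X - lbr L X Y
  = rsc (p ^+ 2 + 4%:R * q)^-1 (N X Y).
Proof.
pose S X Y := rsc 2%:R (J (covJ J nabla X Y)) - rsc p (covJ J nabla X Y)
  + J (covJ J nabla Y X) + covJ J nabla (J Y) X - rsc p (covJ J nabla Y X).
have N_skew : N X Y = S X Y - S Y X.
  rewrite /S /nijenhuis !rsc_nat !mulr2n !lbr_torsion_free /covJ.
  by rewrite !(raddfD J, raddfB J, raddfN J); abel.
by rewrite N_skew /vidal -/(S X Y) -/(S Y X) lbr_torsion_free [RHS]rscDr rscN; abel.
Qed.

Lemma vidal_torsion_freeP : 0 < p ^+ 2 + 4%:R * q ->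
  torsion_free L (vidal J p q nabla) <-> forall X Y, N X Y = 0.
Proof.
move=> disc_gt0; have c_neq0 : (p ^+ 2 + 4%:R * q)^-1 != 0 by rewrite invr_eq0 gt_eqF.
exact: (scaled_eq0P c_neq0 vidal_torsion).
Qed.

End TorsionFreeConnection.

Theorem mainTheorem1 (R : realType) (A : comAlgType R) (V : lmodType A)
  (L : LieRinehart V) (g : V -> V -> A) (nabla : V -> V -> V)
  (J : {linear V -> V}) (p q : R) :
  pseudo_riemannian g ->
  levi_civita L g nabla ->
  (forall X, J (J X) = rsc p (J X) + rsc q X) ->
  0 < p ^+ 2 + 4%:R * q ->
  (forall X Y, g (J X) Y = g X (J Y)) ->
  [<-> integrable L (distD J p q) /\ integrable L (distD' J p q);
       forall X Y, nijenhuis L J X Y = 0;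
       (forall X Y, twistL J p q nabla X Y = 0) /\
         (forall X Y, twistL' J p q nabla X Y = 0);
       torsion_free L (vidal J p q nabla)].
Proof.
move=> _ [_ nabla_tf _] J2 disc_gt0 _.
have intD := integrable_distDP L J2 disc_gt0.
have intD' := integrable_distD'P L J2 disc_gt0.
have N0 := nijenhuis_eq0P L J2 disc_gt0.
have twL := twistL_eq0P J p q nabla_tf.
have twL' := twistL'_eq0P J p q nabla_tf.
have vidal_tf := vidal_torsion_freeP J nabla_tf disc_gt0.
tfae.
- by case=> /intD ? /intD' ?; apply/N0.
- by case/N0=> /twL ? /twL' ?.
- by case=> /twL ? /twL' ?; apply/vidal_tf/N0.
- by move=> /vidal_tf/N0 [/intD ? /intD' ?].
Qed.
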